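(* There exist (vertex-colored) graphs $G, H$ with a permutation equivariant filtration such that the forward persistence diagrams of $G$ and $H$ coincide in all degrees but their backward persistence diagrams differ. Similarly, there exist graphs $G,H$ with a permutation equivariant filtration such that their backward persistence diagrams coincide in all degrees but their forward persistence diagrams differ.
   Context: Graphs are finite, undirected, possibly with self-loops and multi-edges, regarded as topological spaces. A filtration function on $G=(V,E)$ is $f: V\cup E\to\mathbb{R}$ with $f(v),f(w)\le f(e)$ for each edge $e$ with endpoints $v,w$. With distinct values $a_0<\dots<a_n$, put $G_{-1}=\emptyset$, $G_i=f^{-1}((-\infty,a_i])$. The intermediate complex $\mathrm{IC}_i(G,f)$ consists of the vertices and edges of $G_i\setminus G_{i-1}$ together with the endpoints of those edges. For a sequence of spaces and maps, applying $H_k(-;\mathbb{Z}/2)$ gives a persistence module whose $k$-th persistence diagram is the multiset of intervals $(b,d)$ of its interval decomposition, indexed by positions in the sequence. Forward persistence: diagrams of $G_0\subset\dots\subset G_n$. Backward persistence: diagrams of $G\to G/\mathrm{IC}_n(G)\to (G/\mathrm{IC}_n(G))/( *\cup\mathrm{IC}_{n-1}(G))\to\dots\to\text{point}$, contracting $\mathrm{IC}_n,\dots,\mathrm{IC}_0$ in turn, where $*$ is the point to which all previously contracted pieces are collapsed, with quotient maps. A permutation equivariant filtration is a rule assigning to each (possibly vertex-colored) graph $G$ a filtration function $f_G$ such that $f_H\circ\varphi=f_G$ for every (color-preserving) graph isomorphism $\varphi:G\to H$ (e.g. vertex-color filtrations, degree filtration). *)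

From HB Require Import structures.
From mathcomp Require Import all_boot all_order all_algebra.
From mathcomp Require Import reals.
Set Implicit Arguments. Unset Strict Implicit. Unset Printing Implicit Defensive.
Import Order.TTheory GRing.Theory Num.Theory.
Local Open Scope ring_scope.

(* Finite vertex-colored multigraphs (self-loops and multi-edges        *)
(* allowed).  An edge e has (unordered) endpoints (gends e).1,          *)
(* (gends e).2; the order of the pair is irrelevant everywhere below.   *)
(* Colors are natural numbers (an uncolored graph = constant coloring). *)
Record cgraph := CGraph {
  gV : finType;
  gE : finType;
  gends : gE -> gV * gV;
  gcol : gV -> nat }.
Arguments gends : clear implicits.
Arguments gcol : clear implicits.

Definition cell (G : cgraph) := (gV G + gE G)%type.

Definition is_filtration (R : realType) (G : cgraph) (f : cell G -> R) :=
  forall e : gE G, f (inl (gends G e).1) <= f (inr e) /\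
                   f (inl (gends G e).2) <= f (inr e).

Definition giso (G H : cgraph) (phV : gV G -> gV H) (phE : gE G -> gE H) :=
  [/\ bijective phV, bijective phE,
      (forall e, gends H (phE e) = (phV (gends G e).1, phV (gends G e).2) \/
                 gends H (phE e) = (phV (gends G e).2, phV (gends G e).1))
    & (forall v, gcol H (phV v) = gcol G v)].

Definition equivariant_filtration (R : realType)
    (F : forall G : cgraph, cell G -> R) :=
  (forall G, is_filtration (F G)) /\
  (forall G H phV phE, @giso G H phV phE ->
     (forall v, F H (inl (phV v)) = F G (inl v)) /\
     (forall e, F H (inr (phE e)) = F G (inr e))).

(* Cellular Z/2 homology of sub-quotients S/A of G (S, A subcomplexes,  *)
(* A <= S), where S/A is the graph obtained from S by collapsing A to a *)
(* single point * (S/A = S when A is empty).  Vertices of S/A live in   *)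
(* option (gV G) (None = the point * ), edges of S/A are edges of G.    *)
Section Homology.
Variable G : cgraph.
Local Notation V := (gV G).
Local Notation E := (gE G).
Local Notation F2 := 'F_2.

Definition scx := (pred V * pred E)%type.
Definition scx_full : scx := (fun _ => true, fun _ => true).
Definition scx_empty : scx := (fun _ => false, fun _ => false).

Definition mxOf (T U : finType) (P : T -> U -> nat) : 'M[F2]_(#|T|, #|U|) :=
  \matrix_(i, j) (P (enum_val i) (enum_val j))%:R.

Definition diagp (T : finType) (p : pred T) : 'M[F2]_#|T| :=
  mxOf (fun x y : T => ((x == y) && p x) : nat).

Definition qinV (S A : scx) (x : option V) : bool :=
  match x with None => [exists v, A.1 v] | Some v => S.1 v && ~~ A.1 v end.
Definition qinE (S A : scx) (e : E) : bool := S.2 e && ~~ A.2 e.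
Definition qproj (A : scx) (v : V) : option V := if A.1 v then None else Some v.
Definition qends (A : scx) (e : E) : option V * option V :=
  (qproj A (gends G e).1, qproj A (gends G e).2).

(* cellular chain groups (as row spaces) and boundary over Z/2 *)
Definition C0 (S A : scx) := diagp (qinV S A).
Definition C1 (S A : scx) := diagp (qinE S A).
Definition bdry (A : scx) : 'M[F2]_(#|E|, #|{: option V}|) :=
  mxOf (fun e x => (((qends A e).1 == x) : nat) + (((qends A e).2 == x) : nat))%N.
Definition Z1 (S A : scx) := (C1 S A :&: kermx (bdry A))%MS.   (* = H_1 *)
Definition B0 (S A : scx) := (C1 S A *m bdry A)%MS.            (* H_0 = C0/B0 *)

(* chain map of the cellular map S/A -> S'/A' (S <= S', A <= A') induced by
   the identity of G: vertices/edges in A' go to the point * *)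
Definition qmapV (A' : scx) (x : option V) : option V :=
  if x is Some v then qproj A' v else None.
Definition F0 (A' : scx) : 'M[F2]_#|{: option V}| :=
  mxOf (fun x y => (qmapV A' x == y) : nat).
Definition F1 (A' : scx) : 'M[F2]_#|E| :=
  mxOf (fun e e' => ((e == e') && ~~ A'.2 e) : nat).

(* rank of the induced map H_k(S/A; Z/2) -> H_k(S'/A'; Z/2) *)
Definition hrank (k : nat) (SA SA' : scx * scx) : nat :=
  let: (S1, A1) := SA in let: (S2, A2) := SA' in
  match k with
  | 0 => (\rank (C0 S1 A1 *m F0 A2 + B0 S2 A2)%MS - \rank (B0 S2 A2))%N
  | 1 => \rank (Z1 S1 A1 *m F1 A2)
  | _ => 0%N
  end.

(* Persistence diagram of H_k applied to a sequence X_0 -> ... -> X_{L-1}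
   of sub-quotients (maps induced by identity of G): the multiplicity of
   the interval [b, d] (0 <= b <= d <= L-1) in the interval decomposition,
   computed from the rank invariant r(b,d) = rank(H_k X_b -> H_k X_d). *)
Definition rkz (L : nat) (sp : nat -> scx * scx) (k b d : nat) : int :=
  if (b <= d < L)%N then (hrank k (sp b) (sp d))%:Z else 0.
Definition pdiag (L : nat) (sp : nat -> scx * scx) (k : nat) (b d : nat) : int :=
  if (b <= d < L)%N then
    rkz L sp k b d - (if b is b'.+1 then rkz L sp k b' d else 0)
    - rkz L sp k b d.+1 + (if b is b'.+1 then rkz L sp k b' d.+1 else 0)
  else 0.

Variable R : realType.
Variable f : cell G -> R.

(* distinct values a_0 < ... < a_n ; N = n + 1 *)
Definition fvals : seq R := sort <=%R (undup [seq f c | c : cell G]).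
Definition nlev : nat := size fvals.
Definition aval (i : nat) : R := nth 0 fvals i.

Definition inGi (i : nat) (c : cell G) : bool := f c <= aval i.
Definition Gi (i : nat) : scx := (fun v => inGi i (inl v), fun e => inGi i (inr e)).
(* G_{i-1}, with G_{-1} = empty *)
Definition inGprev (i : nat) (c : cell G) : bool :=
  if i is i'.+1 then inGi i' c else false.
Definition newcell (i : nat) (c : cell G) : bool := inGi i c && ~~ inGprev i c.
Definition IC (i : nat) : scx :=
  (fun v => newcell i (inl v) ||
            [exists e, newcell i (inr e) &&
                       (((gends G e).1 == v) || ((gends G e).2 == v))],
   fun e => newcell i (inr e)).
(* A_j = IC_n u IC_{n-1} u ... u IC_{n-j+1}  (A_0 empty, A_{n+1} = G) *)
Definition Acontr (j : nat) : scx :=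
  (fun v => [exists i : 'I_nlev, (nlev - j <= i)%N && (IC i).1 v],
   fun e => [exists i : 'I_nlev, (nlev - j <= i)%N && (IC i).2 e]).

(* Forward: G_0 -> ... -> G_n (positions 0..n). *)
Definition fwdPD (k : nat) : nat -> nat -> int :=
  pdiag nlev (fun i => (Gi i, scx_empty)) k.
(* Backward: G = G/A_0 -> G/A_1 -> ... -> G/A_{n+1} = point (positions 0..n+1). *)
Definition bwdPD (k : nat) : nat -> nat -> int :=
  pdiag nlev.+1 (fun j => (scx_full, Acontr j)) k.

End Homology.

Definition same_fwd (R : realType) (G H : cgraph) (fG : cell G -> R) (fH : cell H -> R) :=
  forall k b d : nat, fwdPD fG k b d = fwdPD fH k b d.
Definition same_bwd (R : realType) (G H : cgraph) (fG : cell G -> R) (fH : cell H -> R) :=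
  forall k b d : nat, bwdPD fG k b d = bwdPD fH k b d.

From mathcomp Require Import all_boot all_order all_algebra reals.
From Stdlib Require Import FunctionalExtensionality.
Set Implicit Arguments. Unset Strict Implicit. Unset Printing Implicit Defensive.
Import Order.TTheory GRing.Theory Num.Theory.
Local Open Scope ring_scope.

(* Colour vertices by 0/1 and filter by colour.  Take the graph with an isolated
   vertex va and one edge vb -- vc, where vc always has colour 1.  The forward
   diagrams only see how many vertices are born at time 0.  The backward ones
   collapse IC_1, the closure of the cells born at time 1; it always contains
   the late edge and hence vb and vc, so they only see whether va is late.
   Colouring (va, vb) as (0, 1) and (1, 0) thus gives equal forward but
   different backward diagrams, and (0, 0) against (0, 1) the reverse. *)

Definition funmx (T U : finType) (g : T -> U) : 'M['F_2]_(#|T|, #|U|) :=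
  mxOf (fun x y => (g x == y) : nat).

Section Indicators.
Variable T : finType.

Lemma natbool_F2 (b : bool) : ((b : nat)%:R : 'F_2) = if b then 1 else 0.
Proof. by case: b. Qed.

Lemma diagpE (p : pred T) i j :
  diagp p i j = if (i == j) && p (enum_val i) then 1 else 0.
Proof. by rewrite mxE (inj_eq enum_val_inj) natbool_F2. Qed.

Lemma diagp0 (p : pred T) : p =1 pred0 -> diagp p = 0.
Proof. by move=> p0; apply/matrixP => i j; rewrite diagpE p0 andbF mxE. Qed.

Lemma diagpT (p : pred T) : p =1 predT -> diagp p = 1%:M.
Proof. by move=> p1; apply/matrixP => i j; rewrite diagpE p1 andbT !mxE; case: eqP. Qed.

Lemma row_diagp (p : pred T) i :
  row i (diagp p) = if p (enum_val i) then delta_mx 0 i else 0.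
Proof.
apply/rowP => j; rewrite mxE diagpE.
by case: (p _); rewrite ?mxE ?andbT ?andbF //= eq_sym; case: eqP.
Qed.

Lemma delta_sub_diagp (p : pred T) i :
  p (enum_val i) -> (delta_mx (0 : 'I_1) i <= diagp p)%MS.
Proof. by move=> pi; apply: (eq_row_sub i); rewrite row_diagp pi. Qed.

Lemma sub_diagpP m (A : 'M['F_2]_(m, #|T|)) (p : pred T) :
  reflect (forall i y, ~~ p y -> A i (enum_rank y) = 0) (A <= diagp p)%MS.
Proof.
apply: (iffP idP) => [/submxP[W ->] i y npy | A0].
  rewrite mxE big1 // => k _; rewrite diagpE.
  by case: eqP => [->|]; rewrite ?enum_rankK ?(negbTE npy) /= ?mulr0.
have -> : A = A *m diagp p; last exact: submxMl.
apply/matrixP => i j; rewrite mxE (bigD1 j) //= big1 => [|k /negbTE kj].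
  rewrite diagpE eqxx /= addr0; case: ifP => [_|/negbT npj]; first by rewrite mulr1.
  by rewrite mulr0 -[j]enum_valK A0.
by rewrite diagpE kj mulr0.
Qed.

Lemma rank_diagp (p : pred T) : \rank (diagp p) = #|p|.
Proof.
pose S := (\sum_(x | p x) <<delta_mx 0 (enum_rank x) : 'rV['F_2]_#|T| >>)%MS.
have /mxdirectP/= rkS : mxdirect S by apply: mxdirect_delta => x y _ _ /enum_rank_inj.
have -> : \rank (diagp p) = \rank S.
  apply/eqmx_rank/andP; split.
    apply/row_subP => i; rewrite row_diagp; case: ifP => [pi|_]; last exact: sub0mx.
    by rewrite -[i in delta_mx _ i]enum_valK (sumsmx_sup (enum_val i)) ?genmxE.
  by apply/sumsmx_subP => x px; rewrite genmxE delta_sub_diagp ?enum_rankK.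
rewrite /S rkS -[RHS]sum1_card; apply: eq_bigr => x _.
by rewrite mxrank_gen mxrank_delta.
Qed.

End Indicators.

Lemma row_funmx (T U : finType) (g : T -> U) i :
  row i (funmx g) = delta_mx 0 (enum_rank (g (enum_val i))).
Proof.
apply/rowP => j; rewrite !mxE natbool_F2 /= -(inj_eq enum_val_inj) enum_rankK.
by rewrite eq_sym; case: eqP.
Qed.

Lemma rank_diagp_funmx (T U : finType) (p : pred T) (g : T -> U) (q : pred U) :
  (forall x, p x -> q (g x)) -> (forall y, q y -> exists2 x, p x & g x = y) ->
  \rank (diagp p *m funmx g) = #|q|.
Proof.
move=> pq qp; rewrite -(rank_diagp q); apply/eqmx_rank/andP; split.
  apply/row_subP => i; rewrite row_mul row_diagp; case: ifP => pi.
    by rewrite -rowE row_funmx delta_sub_diagp ?enum_rankK ?pq.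
  by rewrite mul0mx sub0mx.
apply/row_subP => j; rewrite row_diagp; case: ifP => qj; last exact: sub0mx.
have [x px gx] := qp _ qj; apply: (eq_row_sub (enum_rank x)).
by rewrite row_mul row_diagp enum_rankK px -rowE row_funmx enum_rankK gx enum_valK.
Qed.

Lemma mxrank_adds_notsub (F : fieldType) m1 m2 n
    (A : 'M[F]_(m1, n)) (B : 'M_(m2, n)) :
  \rank B = 1%N -> ~~ (B <= A)%MS -> \rank (A + B)%MS = (\rank A).+1.
Proof.
move=> rkB nBA; have [leAB _] := mxrank_adds_leqif A B.
have [leA eqA] := mxrank_leqif_sup (addsmxSl A B).
have neqA : \rank A != \rank (A + B)%MS.
  by rewrite eqA; apply: contra nBA => /(submx_trans (addsmxSr A B)).
rewrite rkB addn1 in leAB.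
by apply/eqP; rewrite eqn_leq leAB ltn_neqAle neqA leA.
Qed.

Section QuotientHomology.
Variable G : cgraph.
Local Notation empty := (scx_empty G).

Lemma F0_empty : F0 empty = 1%:M.
Proof.
have qid : qmapV empty =1 id by case.
by apply/matrixP => i j; rewrite !mxE qid (inj_eq enum_val_inj) natbool_F2; case: eqP.
Qed.

Lemma B0_full_empty : B0 (scx_full G) empty = bdry empty.
Proof. by rewrite /B0 /C1 diagpT ?mul1mx. Qed.

Lemma card_qinV_empty (S : scx G) : #|qinV S empty| = #|S.1|.
Proof.
have sinj : injective (@Some (gV G)) by move=> ? ? [].
rewrite -(card_image sinj); apply: eq_card => -[v|].
  by rewrite [_ \in qinV _ _]unfold_in /= andbT (mem_map sinj) mem_enum.
by rewrite [_ \in qinV _ _]unfold_in /=; apply/existsP/mapP => -[].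
Qed.

Lemma hrank0_quotient (S A : scx G) :
  (forall v, A.1 v -> S.1 v) -> (forall e, qinE S A e = false) ->
  hrank 0 (S, empty) (S, A) = #|qinV S A|.
Proof.
move=> AS noE; rewrite /hrank /B0 /C1 diagp0 // mul0mx mxrank0 subn0 addsmx0.
apply: rank_diagp_funmx => [[v|] /= | [v|] /=].
- rewrite andbT /qproj => Sv; case: ifP => [Av|nAv]; last by rewrite /= Sv nAv.
  by apply/existsP; exists v.
- by case/existsP.
- by case/andP=> Sv nAv; exists (Some v); rewrite /= ?andbT // /qproj (negbTE nAv).
- by case/existsP=> v Av; exists (Some v); rewrite /= ?andbT ?AS // /qproj Av.
Qed.

Lemma hrank0_vertices (S : scx G) :
  (forall e, S.2 e = false) -> hrank 0 (S, empty) (S, empty) = #|S.1|.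
Proof.
by move=> noE; rewrite hrank0_quotient ?card_qinV_empty // => e; rewrite /qinE noE.
Qed.

End QuotientHomology.

Lemma eq_pdiag (G H : cgraph) L (sp : nat -> scx G * scx G)
    (sp' : nat -> scx H * scx H) k :
  (forall b d, (b <= d < L)%N -> hrank k (sp b) (sp d) = hrank k (sp' b) (sp' d)) ->
  forall b d, pdiag L sp k b d = pdiag L sp' k b d.
Proof.
move=> eq_rk; have eq_rkz b d : rkz L sp k b d = rkz L sp' k b d.
  by rewrite /rkz; case: ifP => // /eq_rk ->.
by move=> b d; rewrite /pdiag; case: b => [|b]; rewrite !eq_rkz.
Qed.

Definition color_level (G : cgraph) (x : cell G) : nat :=
  match x with
  | inl v => gcol G v
  | inr e => maxn (gcol G (gends G e).1) (gcol G (gends G e).2)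
  end.

Definition color_filtration (R : realType) (G : cgraph) (x : cell G) : R :=
  (color_level x)%:R.
Arguments color_filtration : clear implicits.

Lemma color_filtration_equivariant (R : realType) :
  equivariant_filtration (color_filtration R).
Proof.
split=> [G e | G H phV phE [_ _ phE_ends phV_col]].
  by rewrite !ler_nat leq_maxl leq_maxr.
split=> [v | e]; rewrite /color_filtration /= ?phV_col //.
by case: (phE_ends e) => ->; rewrite /= !phV_col // maxnC.
Qed.

Lemma fvals_binary_colors (R : realType) (G : cgraph) :
  (forall v, gcol G v <= 1)%N ->
  (exists v, gcol G v = 0%N) -> (exists v, gcol G v = 1%N) ->
  fvals (color_filtration R G) = [:: 0; 1].
Proof.
move=> le1 [v0 c0] [v1 c1].
have lvl_le1 (x : cell G) : (color_level x <= 1)%N.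
  by case: x => [v|e] /=; rewrite ?geq_max !le1.
rewrite /fvals; apply: lt_sorted_eq; first by rewrite sort_lt_sorted undup_uniq.
  by rewrite /= andbT ltr01.
move=> y; rewrite mem_sort mem_undup !inE; apply/mapP/idP.
  case=> x _ ->; rewrite /color_filtration.
  by case: (color_level x) (lvl_le1 x) => [|[|//]] _; rewrite eqxx ?orbT.
case/orP => /eqP ->; [exists (inl v0) | exists (inl v1)];
  by rewrite ?mem_enum // /color_filtration /= ?c0 ?c1.
Qed.

Lemma exists_ord_has n (P : pred nat) : [exists i : 'I_n, P i] = has P (iota 0 n).
Proof.
apply/existsP/hasP => [[i Pi]|[k]]; first by exists (val i); rewrite ?mem_iota ?ltn_ord.
by rewrite mem_iota add0n => /andP[_ kn] Pk; exists (Ordinal kn).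
Qed.

Lemma exists_unit (P : pred unit) : [exists e, P e] = P tt.
Proof. by apply/existsP/idP => [[[]]|]; last exists tt. Qed.

Definition va : 'I_3 := @Ordinal 3 0 isT.
Definition vb : 'I_3 := @Ordinal 3 1 isT.
Definition vc : 'I_3 := @Ordinal 3 2 isT.

Lemma ord3_ind (P : 'I_3 -> Prop) : P va -> P vb -> P vc -> forall v, P v.
Proof.
move=> Pa Pb Pc [[|[|[|//]]] lt3].
- by rewrite (_ : Ordinal lt3 = va) //; apply: val_inj.
- by rewrite (_ : Ordinal lt3 = vb) //; apply: val_inj.
- by rewrite (_ : Ordinal lt3 = vc) //; apply: val_inj.
Qed.

Definition edge_colors (a b : bool) (v : 'I_3) : nat :=
  nth 0%N [:: nat_of_bool a; nat_of_bool b; 1%N] v.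
Definition edge_graph (a b : bool) : cgraph :=
  @CGraph (ordinal 3) unit (fun _ => (vb, vc)) (edge_colors a b).

Section EdgeGraph.
Variables a b : bool.
Local Notation G := (edge_graph a b).
Local Notation full := (scx_full G).
Local Notation empty := (scx_empty G).

Lemma rank_B0_edge_graph : \rank (B0 full empty) = 1%N.
Proof.
apply/eqP; rewrite eqn_leq (leq_trans (rank_leq_row _)) ?card_unit //=.
rewrite lt0n mxrank_eq0 B0_full_empty.
apply/eqP => /matrixP/(_ (enum_rank tt) (enum_rank (Some vc))).
by rewrite !mxE !enum_rankK => /eqP; rewrite oner_eq0.
Qed.

Lemma hrank0_full_edge_graph : hrank 0 (full, empty) (full, empty) = 2%N.
Proof.
rewrite /hrank /C0 F0_empty mulmx1.
have /addsmx_idPl -> : (B0 full empty <= diagp (qinV full empty))%MS.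
  by rewrite B0_full_empty; apply/sub_diagpP => i [v|] //= _; rewrite !mxE enum_rankK.
by rewrite rank_B0_edge_graph rank_diagp card_qinV_empty card_ord.
Qed.

Lemma hrank0_incl_edge_graph (S : scx G) : S.1 vc = false ->
  hrank 0 (S, empty) (full, empty) = #|S.1|.
Proof.
move=> nSc; rewrite /hrank /C0 F0_empty mulmx1.
rewrite mxrank_adds_notsub ?rank_B0_edge_graph ?subn1 ?rank_diagp ?card_qinV_empty //.
rewrite B0_full_empty; apply/sub_diagpP => /(_ (enum_rank tt) (Some vc)).
by rewrite /= nSc !mxE !enum_rankK => /(_ isT) /eqP; rewrite oner_eq0.
Qed.

End EdgeGraph.

Arguments hrank : simpl never.

Section EdgeGraphFiltration.
Variables (R : realType) (a b : bool).
Hypothesis early : ~~ (a && b).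
Local Notation G := (edge_graph a b).
Local Notation f := (color_filtration R G).

Lemma color_level_edge (e : gE G) : color_level (inr e : cell G) = 1%N.
Proof. by case: b. Qed.

Lemma fvals_edge_graph : fvals f = [:: 0; 1].
Proof.
apply: fvals_binary_colors; last by exists vc.
  by elim/ord3_ind; rewrite /= ?leq_b1.
by case: a b early => [] [] // _; [exists vb | exists va | exists va].
Qed.

Lemma nlev_edge_graph : nlev f = 2%N.
Proof. by rewrite /nlev fvals_edge_graph. Qed.

Lemma color_level_le1 (x : cell G) : (color_level x <= 1)%N.
Proof. by case: x => [v|e] /=; [elim/ord3_ind: v; rewrite /= ?leq_b1 | case: b]. Qed.

Lemma inGi0_edge_graph (x : cell G) : inGi f 0 x = (color_level x == 0%N).
Proof. by rewrite /inGi /aval fvals_edge_graph /color_filtration /= lern0. Qed.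

Lemma inGi1_edge_graph (x : cell G) : inGi f 1 x.
Proof.
by rewrite /inGi /aval fvals_edge_graph /color_filtration /= lern1 color_level_le1.
Qed.

Lemma Gi0_edge_graph : Gi f 0 = ((fun v => edge_colors a b v == 0%N), fun _ => false).
Proof.
congr pair; apply: functional_extensionality => x; rewrite inGi0_edge_graph //.
by rewrite color_level_edge.
Qed.

Lemma Gi1_edge_graph : Gi f 1 = scx_full G.
Proof. by congr pair; apply: functional_extensionality => x; rewrite inGi1_edge_graph. Qed.

Lemma newcell0_edge_graph (x : cell G) : newcell f 0 x = (color_level x == 0%N).
Proof. by rewrite /newcell inGi0_edge_graph andbT. Qed.

Lemma newcell1_edge_graph (x : cell G) : newcell f 1 x = (color_level x != 0%N).
Proof. by rewrite /newcell /= inGi1_edge_graph inGi0_edge_graph. Qed.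

Lemma Acontr_edge_graph j : Acontr f j =
  (fun v => ((2 - j <= 0)%N && (IC f 0).1 v) || ((2 - j <= 1)%N && (IC f 1).1 v),
   fun e => ((2 - j <= 0)%N && (IC f 0).2 e) || ((2 - j <= 1)%N && (IC f 1).2 e)).
Proof.
congr pair; apply: functional_extensionality => x.
  rewrite (exists_ord_has _ (fun i => (nlev f - j <= i)%N && (IC f i).1 x)).
  by rewrite nlev_edge_graph /= orbF.
rewrite (exists_ord_has _ (fun i => (nlev f - j <= i)%N && (IC f i).2 x)).
by rewrite nlev_edge_graph /= orbF.
Qed.

Lemma Acontr0_edge_graph : Acontr f 0 = scx_empty G.
Proof. by rewrite Acontr_edge_graph. Qed.

Lemma Acontr1_edge_graph : Acontr f 1 = (fun v => (v != va) || a, fun _ => true).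
Proof.
rewrite Acontr_edge_graph /IC /=; congr pair; apply: functional_extensionality.
  move=> v; rewrite exists_unit !newcell1_edge_graph color_level_edge /=.
  elim/ord3_ind: v; rewrite ?orbT //=.
  by case: a.
by move=> e; rewrite newcell1_edge_graph color_level_edge.
Qed.

Lemma Acontr2_edge_graph : Acontr f 2 = scx_full G.
Proof.
rewrite Acontr_edge_graph /IC /=; congr pair; apply: functional_extensionality => x;
  by rewrite newcell0_edge_graph newcell1_edge_graph; case: eqP; rewrite ?orbT.
Qed.

Lemma card_early_vertices :
  #|(fun v => edge_colors a b v == 0%N)| = (~~ a + ~~ b)%N.
Proof.
by rewrite -sum1_card big_mkcond /= !big_ord_recr big_ord0 /=; case: a; case: b.
Qed.

Lemma fwdPD_edge_graph : fwdPD f 0 0 1 = (~~ a + ~~ b)%N%:Z.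
Proof.
rewrite /fwdPD /pdiag /rkz nlev_edge_graph Gi0_edge_graph Gi1_edge_graph /=.
by rewrite hrank0_incl_edge_graph ?card_early_vertices ?subr0 ?addr0.
Qed.

Lemma bwdPD_edge_graph : bwdPD f 0 0 0 = (a : nat)%:Z.
Proof.
rewrite /bwdPD /pdiag /rkz nlev_edge_graph /= Acontr0_edge_graph Acontr1_edge_graph.
rewrite hrank0_full_edge_graph hrank0_quotient //.
have -> : #|qinV (scx_full G) (fun v => (v != va) || a, xpredT)| = (1 + ~~ a)%N.
  case: a; [rewrite -[RHS](card1 (None : option 'I_3)) |
            rewrite -[RHS](card2 None (Some va))];
    apply: eq_card => -[v|]; rewrite [_ \in qinV _ _]unfold_in /= ?orbT ?orbF ?inE //.
  - by apply/existsP; exists va.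
  - by rewrite negbK.
  - by apply/existsP; exists vb.
by case: a.
Qed.

End EdgeGraphFiltration.

Lemma same_fwd_edge_graph (R : realType) a b a' b' :
  ~~ (a && b) -> ~~ (a' && b') -> (~~ a + ~~ b = ~~ a' + ~~ b')%N ->
  same_fwd (color_filtration R (edge_graph a b)) (color_filtration R (edge_graph a' b')).
Proof.
move=> early early' card_eq k i j; rewrite /fwdPD !nlev_edge_graph //.
(* [hrank] ignores colours, so the ranks not computed below agree by conversion. *)
apply: eq_pdiag => {i j} i j /andP[ij]; case: j ij => [|[|//]] + _.
  case: i => // _; rewrite !Gi0_edge_graph //; case: k => [|[|//]] //.
  by rewrite !hrank0_vertices // !card_early_vertices.
case: i => [|[|//]] _; rewrite ?Gi0_edge_graph ?Gi1_edge_graph //.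
by case: k => [|[|//]] //; rewrite !hrank0_incl_edge_graph // !card_early_vertices.
Qed.

Lemma same_bwd_edge_graph (R : realType) a b b' :
  ~~ (a && b) -> ~~ (a && b') ->
  same_bwd (color_filtration R (edge_graph a b)) (color_filtration R (edge_graph a b')).
Proof.
move=> early early' k i j; rewrite /bwdPD !nlev_edge_graph //.
have Acontr_eq j' : (j' < 3)%N ->
    Acontr (color_filtration R (edge_graph a b)) j' =
    Acontr (color_filtration R (edge_graph a b')) j'.
  case: j' => [|[|[|//]]] _.
  - by rewrite !Acontr0_edge_graph.
  - by rewrite !Acontr1_edge_graph.
  - by rewrite !Acontr2_edge_graph.
apply: eq_pdiag => {i j} i j /andP[ij j3].
by rewrite !Acontr_eq // (leq_ltn_trans ij j3).
Qed.

Theorem proposition1 (R : realType) :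
  (exists F : forall G : cgraph, cell G -> R,
     equivariant_filtration F /\
     exists G H : cgraph, same_fwd (F G) (F H) /\ ~ same_bwd (F G) (F H)) /\
  (exists F : forall G : cgraph, cell G -> R,
     equivariant_filtration F /\
     exists G H : cgraph, same_bwd (F G) (F H) /\ ~ same_fwd (F G) (F H)).
Proof.
split; exists (color_filtration R); split; try exact: color_filtration_equivariant.
- exists (edge_graph false true), (edge_graph true false).
  split; first exact: same_fwd_edge_graph.
  by move/(_ 0 0 0)%N; rewrite !bwdPD_edge_graph.
- exists (edge_graph false false), (edge_graph false true).
  split; first exact: same_bwd_edge_graph.
  by move/(_ 0 0 1)%N; rewrite !fwdPD_edge_graph.
Qed.
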